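(* Let $G=G_1\times G_2$ be a product of commutative groups, $V_1\subset G_1$, $V_2\subset G_2$ finite sets, $U=V_1\times V_2$, and $1<p<\infty$. Then $\beta_p(U)=\beta_p(V_1)\beta_p(V_2)$, where $\beta_p(U)$ is computed in $G$ and $\beta_p(V_i)$ in $G_i$.
   Context: For a finite set $U$ in a commutative group $K$ and $1<p<\infty$, $\beta_p(U)=\inf_{A,B}\frac{|A+B+U|}{|A|^{1/p}|B|^{1-1/p}}$, the infimum over all nonempty finite $A,B\subset K$. *)

From HB Require Import structures.
From mathcomp Require Import all_boot all_order all_algebra.
From mathcomp Require Import finmap.
From mathcomp Require Import all_classical all_reals all_analysis.
Set Implicit Arguments. Unset Strict Implicit. Unset Printing Implicit Defensive.
Import Order.TTheory GRing.Theory Num.Theory.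
Local Open Scope classical_set_scope.
Local Open Scope ring_scope.
Local Open Scope fset_scope.

Definition sumset (K : zmodType) (A B : {fset K}) : {fset K} :=
  [fset (a + b)%R | a in A, b in B].

Definition fsetprod (K1 K2 : zmodType) (V1 : {fset K1}) (V2 : {fset K2})
  : {fset (K1 * K2)%type} := [fset ((x, y) : K1 * K2)%type | x : K1 in V1, y : K2 in V2].

Definition beta (R : realType) (K : zmodType) (p : R) (U : {fset K}) : R :=
  inf [set x : R | exists A B : {fset K},
        [/\ A != fset0, B != fset0 &
         x = (#|` sumset (sumset A B) U|%:R)
             / ((#|` A|%:R) `^ (1 / p) * (#|` B|%:R) `^ (1 - 1 / p))]].

From HB Require Import structures.
From mathcomp Require Import all_boot all_order all_algebra.
From mathcomp Require Import finmap.
From mathcomp Require Import all_classical all_reals all_analysis.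
Import Order.TTheory GRing.Theory Num.Theory.
Set Implicit Arguments. Unset Strict Implicit. Unset Printing Implicit Defensive.
Local Open Scope fset_scope.
Local Open Scope ring_scope.

(* Testing beta on product sets A1 x A2, B1 x B2, whose ratio
   |A + B + U| / (|A|^(1/p) |B|^(1-1/p)) factorises, gives
   beta(V1 x V2) <= beta(V1) beta(V2).  Conversely, slice A, B in G1 x G2 into
   fibres over G1: since A_x + B_y + V2 lies in the fibre of A + B + V1 x V2
   over x + y + v for v in V1, the fibre sizes f, g, h of A, B, A + B + V1 x V2
   satisfy beta(V2) f(x)^(1/p) g(y)^(1-1/p) <= h(x + y + v).  A discrete
   Prekopa-Leindler inequality relative to V1 then bounds
   beta(V1) beta(V2) |A|^(1/p) |B|^(1-1/p) by |A + B + V1 x V2|.  That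
   inequality is proved by induction on the sizes of the supports of f and g:
   remove from f and g constant layers proportional to their means; the
   removed layer is controlled by beta(V1), and the remainder, thanks to the
   superadditivity of the weighted geometric mean (Hoelder), by induction. *)

Section GeometricMean.
Variables (R : realType) (e : R).

Definition gmean (u w : R) : R := u `^ e * w `^ (1 - e).

Lemma gmean_ge0 u w : 0 <= gmean u w.
Proof. by rewrite mulr_ge0 ?powR_ge0. Qed.

Lemma gmean_gt0 u w : 0 < u -> 0 < w -> 0 < gmean u w.
Proof. by move=> u0 w0; rewrite mulr_gt0 ?powR_gt0. Qed.

Lemma gmeanM u u' w w' : 0 <= u -> 0 <= u' -> 0 <= w -> 0 <= w' ->
  gmean (u * u') (w * w') = gmean u w * gmean u' w'.
Proof.
by move=> u0 u'0 w0 w'0; rewrite /gmean !powRM// mulrACA.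
Qed.

Lemma gmean_id t : 0 <= t -> gmean t t = t.
Proof. by move=> t0; rewrite /gmean -powRD ?subrKC ?powRr1// oner_eq0. Qed.

Lemma gmeanZ t u w : 0 <= t -> 0 <= u -> 0 <= w ->
  gmean (t * u) (t * w) = t * gmean u w.
Proof. by move=> t0 u0 w0; rewrite gmeanM ?gmean_id. Qed.

Hypotheses (e_gt0 : 0 < e) (e_lt1 : e < 1).

Lemma gmean0l w : gmean 0 w = 0.
Proof. by rewrite /gmean powR0 ?mul0r ?gt_eqF. Qed.

Lemma gmean0r u : gmean u 0 = 0.
Proof. by rewrite /gmean powR0 ?mulr0 // gt_eqF // subr_gt0. Qed.

Lemma ler_gmean u u' w w' : 0 <= u -> u <= u' -> 0 <= w -> w <= w' ->
  gmean u w <= gmean u' w'.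
Proof.
move=> u0 uu' w0 ww'.
have u'0 := le_trans u0 uu'; have w'0 := le_trans w0 ww'.
have e'_ge0 : 0 <= 1 - e by rewrite subr_ge0 ltW.
by rewrite ler_pM ?powR_ge0// ge0_ler_powR ?nnegrE// ltW.
Qed.

(* Hoelder's inequality for two terms, with exponents 1/e and 1/(1-e). *)
Lemma gmean_superadd u u' w w' : 0 <= u -> 0 <= u' -> 0 <= w -> 0 <= w' ->
  gmean u w + gmean u' w' <= gmean (u + u') (w + w').
Proof.
move=> u0 u'0 w0 w'0; have e'_gt0 : 0 < 1 - e by rewrite subr_gt0.
have := @hoelder2 R (u `^ e) (u' `^ e) (w `^ (1 - e)) (w' `^ (1 - e))
  e^-1 (1 - e)^-1.
rewrite !invrK subrKC -!powRrM !mulfV ?gt_eqF// !powRr1 ?addr_ge0//.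
by apply; rewrite ?powR_ge0 ?invr_gt0.
Qed.

Lemma gmeanB_le a b u w : 0 <= a -> a <= u -> 0 <= b -> b <= w ->
  gmean (u - a) (w - b) <= gmean u w - gmean a b.
Proof.
move=> a_ge0 au b_ge0 bw; rewrite lerBrDl.
have := gmean_superadd (u' := u - a) (w' := w - b) a_ge0 _ b_ge0.
by rewrite !subrKC !subr_ge0; apply.
Qed.

End GeometricMean.

Section FiniteSums.
Variables (R : realType) (T : choiceType).
Implicit Types (X : {fset T}) (f : T -> R).

Lemma fset_argmin X f x : x \in X ->
  exists2 x0, x0 \in X & {in X, forall x, f x0 <= f x}.
Proof.
move=> xX; have [/= x0 _ x0_min] := @arg_minP _ _ X [` xX] predT (f \o val) isT.
by exists (val x0) => [|z zX]; [exact: valP | exact: (x0_min [` zX])].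
Qed.

Lemma sumr_const_fset X (c : R) : \sum_(x <- X) c = #|` X|%:R * c.
Proof. by rewrite card_fset_sum1 natr_sum mulr_suml; under [RHS]eq_bigr do rewrite mul1r. Qed.

Lemma ler_sum_fsubset X X' f : X `<=` X' -> {in X', forall x, 0 <= f x} ->
  \sum_(x <- X) f x <= \sum_(x <- X') f x.
Proof.
move=> XX' f_ge0.
have -> : \sum_(x <- X) f x = \sum_(x <- X) (if x \in X then f x else 0).
  by apply: eq_fbigr => x ->.
rewrite (big_fset_incl _ XX') => [|x _ /negbTE -> //].
by rewrite big_seq [leRHS]big_seq; apply: ler_sum => x /f_ge0; case: ifP.
Qed.

Lemma sum_peel X f (a : R) : {in X, forall x, a <= f x} ->
  \sum_(x <- [fset x in X | a < f x]) (f x - a) = \sum_(x <- X) f x - #|` X|%:R * a.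
Proof.
move=> a_le_f; rewrite -sumr_const_fset -sumrB.
apply: big_fset_incl => [|x xX]; first exact: fset_sub.
by rewrite !inE xX /= -leNgt => fa; apply/eqP; rewrite subr_eq0 eq_le fa a_le_f.
Qed.

Lemma card_peel_lt X f (a : R) x : x \in X -> f x = a ->
  (#|` [fset x in X | (a < f x)%R]| < #|` X|)%N.
Proof.
move=> xX fxa; apply: fproper_ltn_card; rewrite fproperE fset_sub /=.
by apply/fsubsetPn; exists x; rewrite // !inE xX fxa ltxx.
Qed.

Definition avg X f : R := (\sum_(x <- X) f x) / #|` X|%:R.

Lemma card_mul_avg X f x : x \in X -> #|` X|%:R * avg X f = \sum_(x <- X) f x.
Proof. by move=> xX; rewrite mulrC divfK // pnatr_eq0 -lt0n cardfs_gt0; apply/fset0Pn; exists x. Qed.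

Lemma avg_gt0 X f x : x \in X -> {in X, forall x, 0 < f x} -> 0 < avg X f.
Proof.
move=> xX f_gt0; apply: divr_gt0; last by rewrite ltr0n cardfs_gt0; apply/fset0Pn; exists x.
rewrite (big_fsetD1 x) //= ltr_wpDr ?f_gt0 // big_seq sumr_ge0 // => z.
by rewrite inE => /andP[_ /f_gt0 /ltW].
Qed.

Lemma min_ratio_avg X f x : x \in X -> {in X, forall x, 0 < f x} ->
  exists r, [/\ 0 < r <= 1, {in X, forall x, r * avg X f <= f x} &
                exists2 x0, x0 \in X & f x0 = r * avg X f].
Proof.
move=> xX f_gt0; have avg_gt0 := avg_gt0 xX f_gt0.
have [x0 x0X x0_min] := fset_argmin f xX.
have X_gt0 : 0 < #|` X|%:R :> R by rewrite ltr0n cardfs_gt0; apply/fset0Pn; exists x0.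
have min_le_avg : f x0 <= avg X f.
  rewrite ler_pdivlMr // mulrC -sumr_const_fset big_seq [leRHS]big_seq.
  exact: ler_sum.
exists (f x0 / avg X f); rewrite divfK ?gt_eqF //; split => //; last by exists x0.
by rewrite divr_gt0 ?f_gt0 // ler_pdivrMr // mul1r.
Qed.

Lemma peel_levels X Y f g x y : x \in X -> y \in Y ->
  {in X, forall x, 0 < f x} -> {in Y, forall y, 0 < g y} ->
  exists t, [/\ 0 < t <= 1,
    {in X, forall x, t * avg X f <= f x}, {in Y, forall y, t * avg Y g <= g y} &
    (exists2 x0, x0 \in X & f x0 = t * avg X f) \/
    (exists2 y0, y0 \in Y & g y0 = t * avg Y g)].
Proof.
move=> xX yY f_gt0 g_gt0.
have [r [/andP[r_gt0 r_le1] r_le x0X]] := min_ratio_avg xX f_gt0.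
have [q [/andP[q_gt0 q_le1] q_le y0Y]] := min_ratio_avg yY g_gt0.
have avgf_ge0 := ltW (avg_gt0 xX f_gt0); have avgg_ge0 := ltW (avg_gt0 yY g_gt0).
exists (Order.min r q); split.
- by rewrite lt_min r_gt0 q_gt0 ge_min r_le1.
- by move=> z zX; apply: le_trans (r_le z zX); rewrite ler_wpM2r // ge_min lexx.
- by move=> z zY; apply: le_trans (q_le z zY); rewrite ler_wpM2r // ge_min lexx orbT.
by case: leP => _; [left | right].
Qed.

Lemma gmean_sum_peel (e : R) X Y f g x y t : x \in X -> y \in Y ->
  {in X, forall x, 0 < f x} -> {in Y, forall y, 0 < g y} -> 0 <= t <= 1 ->
  {in X, forall x, t * avg X f <= f x} -> {in Y, forall y, t * avg Y g <= g y} ->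
  let a := t * avg X f in let b := t * avg Y g in
  gmean e (\sum_(x <- X) f x) (\sum_(y <- Y) g y) =
    gmean e #|` X|%:R #|` Y|%:R * gmean e a b +
    gmean e (\sum_(x <- [fset x in X | a < f x]) (f x - a))
            (\sum_(y <- [fset y in Y | b < g y]) (g y - b)).
Proof.
move=> xX yY f_gt0 g_gt0 /andP[t_ge0 t_le1] a_le_f b_le_g a b.
have sumf_ge0 : 0 <= \sum_(x <- X) f x by rewrite big_seq sumr_ge0 // => z /f_gt0 /ltW.
have sumg_ge0 : 0 <= \sum_(y <- Y) g y by rewrite big_seq sumr_ge0 // => z /g_gt0 /ltW.
have a_ge0 : 0 <= a by rewrite mulr_ge0 // ltW // (avg_gt0 xX).
have b_ge0 : 0 <= b by rewrite mulr_ge0 // ltW // (avg_gt0 yY).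
rewrite !sum_peel // -gmeanM ?ler0n // [#|` X|%:R * _]mulrCA [#|` Y|%:R * _]mulrCA.
rewrite (card_mul_avg _ xX) (card_mul_avg _ yY).
have subrMl u : u - t * u = (1 - t) * u by rewrite mulrBl mul1r.
by rewrite !subrMl !gmeanZ ?subr_ge0 // -mulrDl subrKC mul1r.
Qed.

End FiniteSums.

Section Sumset.
Variable K : zmodType.

Lemma sumsetP (A B : {fset K}) z :
  reflect (exists2 a, a \in A & exists2 b, b \in B & z = a + b) (z \in sumset A B).
Proof.
apply: (iffP idP) => [/imfset2P|] [a aA [b bB ->]]; last apply/imfset2P;
  by exists a => //; exists b.
Qed.

Lemma mem_sumset (A B : {fset K}) a b : a \in A -> b \in B -> a + b \in sumset A B.
Proof. by move=> aA bB; apply/sumsetP; exists a => //; exists b. Qed.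

Lemma sumset0l (A : {fset K}) : sumset fset0 A = fset0.
Proof. by apply/fsetP => z; rewrite inE; apply/sumsetP => -[]. Qed.

Lemma sumset0r (A : {fset K}) : sumset A fset0 = fset0.
Proof. by apply/fsetP => z; rewrite inE; apply/sumsetP => -[a _ []]. Qed.

Lemma sumsetS (A A' B B' : {fset K}) : A `<=` A' -> B `<=` B' ->
  sumset A B `<=` sumset A' B'.
Proof.
move=> /fsubsetP AA' /fsubsetP BB'; apply/fsubsetP => _ /sumsetP[a aA [b bB ->]].
by rewrite mem_sumset ?AA' ?BB'.
Qed.

End Sumset.

Section Product.
Variables K1 K2 : zmodType.

Lemma mem_fsetprod (A : {fset K1}) (B : {fset K2}) w :
  (w \in fsetprod A B) = (w.1 \in A) && (w.2 \in B).
Proof.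
apply/idP/andP => [/imfset2P[a aA [b bB ->]] // | [aA bB]].
by apply/imfset2P; exists w.1 => //; exists w.2 => //; case: w {aA bB}.
Qed.

Lemma sumset_fsetprod (A1 B1 : {fset K1}) (A2 B2 : {fset K2}) :
  sumset (fsetprod A1 A2) (fsetprod B1 B2) = fsetprod (sumset A1 B1) (sumset A2 B2).
Proof.
apply/fsetP => -[z1 z2]; rewrite mem_fsetprod /=; apply/sumsetP/andP.
  case=> -[a1 a2]; rewrite mem_fsetprod => /andP[a1A a2A] [[b1 b2]].
  by rewrite mem_fsetprod => /andP[b1B b2B] [-> ->]; rewrite !mem_sumset.
case=> /sumsetP[a1 a1A [b1 b1B ->]] /sumsetP[a2 a2A [b2 b2B ->]].
by exists (a1, a2); rewrite ?mem_fsetprod ?a1A//; exists (b1, b2); rewrite ?mem_fsetprod ?b1B.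
Qed.

Lemma fsetprod_neq0 (A : {fset K1}) (B : {fset K2}) :
  A != fset0 -> B != fset0 -> fsetprod A B != fset0.
Proof.
move=> /fset0Pn[a aA] /fset0Pn[b bB]; apply/fset0Pn; exists (a, b).
by rewrite mem_fsetprod aA bB.
Qed.

Lemma fst_sumset (C D : {fset K1 * K2}) : fst @` sumset C D = sumset (fst @` C) (fst @` D).
Proof.
apply/fsetP => x; apply/imfsetP/sumsetP => [[_ /sumsetP[w wC [w' w'D ->]] ->] | ].
  by exists w.1; rewrite ?in_imfset //; exists w'.1; rewrite ?in_imfset.
case=> _ /imfsetP[w wC ->] [_ /imfsetP[w' w'D ->] ->].
by exists (w + w'); rewrite ?mem_sumset.
Qed.

Definition fiber (C : {fset K1 * K2}) (x : K1) : {fset K2} :=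
  [fset w.2 | w in C & w.1 == x].

Lemma mem_fiber C x y : (y \in fiber C x) = ((x, y) \in C).
Proof.
apply/imfsetP/idP => [[[x' y'] /[!inE] /andP[xyC /eqP /= x'x ->]] | xyC].
  by rewrite -x'x.
by exists (x, y); rewrite //= inE xyC eqxx.
Qed.

Lemma fiber_neq0 C x : x \in fst @` C -> fiber C x != fset0.
Proof.
by case/imfsetP => w wC ->; apply/fset0Pn; exists w.2; rewrite mem_fiber -surjective_pairing.
Qed.

Lemma fiber_fsetprod (A : {fset K1}) (B : {fset K2}) x :
  x \in A -> fiber (fsetprod A B) x = B.
Proof. by move=> xA; apply/fsetP => y; rewrite mem_fiber mem_fsetprod /= xA. Qed.

Lemma fiber_sumset C D x x' :
  sumset (fiber C x) (fiber D x') `<=` fiber (sumset C D) (x + x').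
Proof.
apply/fsubsetP => _ /sumsetP[y + [y' +] ->]; rewrite !mem_fiber => xyC x'y'D.
by have := mem_sumset xyC x'y'D.
Qed.

Lemma sum_card_fiber (C : {fset K1 * K2}) (X : {fset K1}) :
  {subset fst @` C <= X} -> (\sum_(x <- X) #|` fiber C x|)%N = #|` C|.
Proof.
move=> CX.
have card_fiber x : #|` fiber C x| = (\sum_(w <- C | w.1 == x) 1)%N.
  rewrite card_in_imfset /=; last first.
    by move=> [x1 y1] [x2 y2] /andP[_ /eqP /= ->] /andP[_ /eqP /= ->] /= ->.
  by rewrite size_filter sum1_count.
under eq_bigr do rewrite card_fiber big_mkcond.
rewrite exchange_big card_fset_sum1 big_seq [RHS]big_seq; apply: eq_bigr => w wC.
rewrite (big_fsetD1 w.1) ?CX ?in_imfset //= eqxx big1_fset // => x.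
by rewrite !inE => /andP[xw _] _; rewrite eq_sym (negbTE xw).
Qed.

Lemma card_fsetprod (A : {fset K1}) (B : {fset K2}) :
  #|` fsetprod A B| = (#|` A| * #|` B|)%N.
Proof.
rewrite -(@sum_card_fiber _ A); last by move=> _ /imfsetP[w + ->]; rewrite mem_fsetprod => /andP[].
rewrite [in RHS]card_fset_sum1 big_distrl; apply: eq_big_seq => x xA /=.
by rewrite mul1n fiber_fsetprod.
Qed.

End Product.

Section DiscretePrekopaLeindler.
Variables (R : realType) (K : zmodType) (V : {fset K}) (e c : R).
Hypotheses (e_gt0 : 0 < e) (e_lt1 : e < 1).
Hypothesis c_gmean_le_card : forall S T : {fset K}, S != fset0 -> T != fset0 ->
  c * gmean e #|` S|%:R #|` T|%:R <= #|` sumset (sumset S T) V|%:R.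

Lemma discrete_prekopa_leindler (X Y : {fset K}) (f g h : K -> R) :
  {in X, forall x, 0 < f x} -> {in Y, forall y, 0 < g y} ->
  (forall x y v, x \in X -> y \in Y -> v \in V -> gmean e (f x) (g y) <= h (x + y + v)) ->
  c * gmean e (\sum_(x <- X) f x) (\sum_(y <- Y) g y)
    <= \sum_(z <- sumset (sumset X Y) V) h z.
Proof.
have [n] := ubnP (#|` X| + #|` Y|); elim: n X Y f g h => // n IH X Y f g h.
rewrite ltnS => card_le f_gt0 g_gt0 fgh.
have [->|[x xX]] := fset_0Vmem X.
  by rewrite big_seq_fset0 gmean0l // mulr0 !sumset0l big_seq_fset0.
have [->|[y yY]] := fset_0Vmem Y.
  by rewrite big_seq_fset0 gmean0r // mulr0 sumset0r sumset0l big_seq_fset0.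
have [t [/andP[t_gt0 t_le1] a_le_f b_le_g a_or_b]] := peel_levels xX yY f_gt0 g_gt0.
have t01 : 0 <= t <= 1 by rewrite ltW.
(* Cut f and g at the levels a <= f, b <= g; the lower layer is handled by the
   hypothesis on V, the rest by induction since X or Y strictly shrinks. *)
rewrite (gmean_sum_peel e xX yY f_gt0 g_gt0 t01 a_le_f b_le_g) /= mulrDr.
set a := t * avg X f; set b := t * avg Y g; set m := gmean e a b.
set X' := [fset x in X | a < f x]; set Y' := [fset y in Y | b < g y].
have a_ge0 : 0 <= a by rewrite mulr_ge0 ?ltW // (avg_gt0 xX).
have b_ge0 : 0 <= b by rewrite mulr_ge0 ?ltW // (avg_gt0 yY).
have m_le_h z : z \in sumset (sumset X Y) V -> m <= h z.
  case/sumsetP => _ /sumsetP[x' x'X [y' y'Y ->]] [v vV ->].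
  by apply: le_trans (fgh _ _ _ x'X y'Y vV); rewrite ler_gmean ?a_le_f ?b_le_g.
have card_Z : c * (gmean e #|` X|%:R #|` Y|%:R * m) <= #|` sumset (sumset X Y) V|%:R * m.
  by rewrite mulrA ler_wpM2r ?gmean_ge0 ?c_gmean_le_card //; apply/fset0Pn; [exists x | exists y].
have peeled : c * gmean e (\sum_(x <- X') (f x - a)) (\sum_(y <- Y') (g y - b))
    <= \sum_(z <- sumset (sumset X' Y') V) (h z - m).
  apply: IH => [|x' /[!inE] /andP[_]|y' /[!inE] /andP[_]|x' y' v /[!inE]]; rewrite ?subr_gt0 //.
  - have cardX' : (#|` X'| <= #|` X|)%N by apply/fsubset_leq_card/fset_sub.
    have cardY' : (#|` Y'| <= #|` Y|)%N by apply/fsubset_leq_card/fset_sub.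
    case: a_or_b => [[x0 x0X fx0] | [y0 y0Y gy0]]; apply: leq_trans card_le.
      by rewrite -addSn leq_add // (card_peel_lt x0X fx0).
    by rewrite -addnS leq_add // (card_peel_lt y0Y gy0).
  move=> /andP[x'X ax'] /andP[y'Y by'] vV.
  apply: le_trans (lerB (fgh _ _ _ x'X y'Y vV) (lexx m)).
  by apply: gmeanB_le => //; apply: ltW.
have peeled_le : \sum_(z <- sumset (sumset X' Y') V) (h z - m)
    <= \sum_(z <- sumset (sumset X Y) V) (h z - m).
  apply: ler_sum_fsubset => [|z /m_le_h]; last by rewrite subr_ge0.
  by rewrite !sumsetS ?fset_sub.
rewrite -[\sum_(z <- _) h z](subrK (\sum_(z <- sumset (sumset X Y) V) m)).
rewrite -sumrB sumr_const_fset addrC.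
exact: lerD (le_trans peeled peeled_le) card_Z.
Qed.

End DiscretePrekopaLeindler.


Lemma le_mul_inf (R : realType) (S : set R) (c x : R) : (S !=set0)%classic -> 0 <= c ->
  (forall s, S s -> x <= c * s) -> x <= c * inf S.
Proof.
move=> [s0 Ss0]; rewrite le_eqVlt => /predU1P[<- /(_ _ Ss0) | c_gt0 x_le].
  by rewrite !mul0r.
rewrite -ler_pdivrMl //; apply: lb_le_inf; first by exists s0.
by move=> s Ss; rewrite ler_pdivrMl // x_le.
Qed.

Section Beta.
Variables (R : realType) (K : zmodType) (p : R).
Implicit Types U A B S T : {fset K}.

Definition beta_ratio U A B : R :=
  #|` sumset (sumset A B) U|%:R / gmean (1 / p) #|` A|%:R #|` B|%:R.

Lemma beta_ratio_ge0 U A B : 0 <= beta_ratio U A B.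
Proof. by rewrite divr_ge0 ?gmean_ge0. Qed.

Lemma beta_le_ratio U A B : A != fset0 -> B != fset0 -> beta p U <= beta_ratio U A B.
Proof.
move=> A_neq0 B_neq0; apply: ge_inf; last by exists A, B.
by exists 0 => _ [A' [B' [_ _ ->]]]; apply: beta_ratio_ge0.
Qed.

Lemma le_mul_beta U c x : 0 <= c ->
  (forall A B, A != fset0 -> B != fset0 -> x <= c * beta_ratio U A B) ->
  x <= c * beta p U.
Proof.
move=> c_ge0 x_le; apply: le_mul_inf c_ge0 _ => [|_ [A [B [A_neq0 B_neq0 ->]]]].
  have K0_neq0 : [fset (0 : K)] != fset0 by apply/fset0Pn; exists 0; rewrite inE.
  by exists (beta_ratio U [fset 0] [fset 0]), [fset 0], [fset 0].
exact: x_le.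
Qed.

Lemma beta_ge0 U : 0 <= beta p U.
Proof.
by rewrite -[beta p U]mul1r; apply: le_mul_beta => // A B _ _; rewrite mul1r beta_ratio_ge0.
Qed.

Lemma beta_gmean_le_card U S T : S != fset0 -> T != fset0 ->
  beta p U * gmean (1 / p) #|` S|%:R #|` T|%:R <= #|` sumset (sumset S T) U|%:R.
Proof.
move=> S_neq0 T_neq0; rewrite -ler_pdivlMr ?gmean_gt0 ?ltr0n ?cardfs_gt0 //.
exact: beta_le_ratio.
Qed.

End Beta.

Section BetaProduct.
Variables (R : realType) (K1 K2 : zmodType) (p : R) (V1 : {fset K1}) (V2 : {fset K2}).

Lemma beta_ratio_fsetprod (A1 B1 : {fset K1}) (A2 B2 : {fset K2}) :
  beta_ratio p (fsetprod V1 V2) (fsetprod A1 A2) (fsetprod B1 B2) =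
  beta_ratio p V1 A1 B1 * beta_ratio p V2 A2 B2.
Proof.
by rewrite /beta_ratio !sumset_fsetprod !card_fsetprod !natrM gmeanM ?ler0n // mulf_div.
Qed.

Lemma beta_fsetprod_le : beta p (fsetprod V1 V2) <= beta p V1 * beta p V2.
Proof.
rewrite mulrC; apply: le_mul_beta (beta_ge0 _ _) _ => A2 B2 A2_neq0 B2_neq0.
rewrite mulrC; apply: le_mul_beta (beta_ratio_ge0 _ _ _ _) _ => A1 B1 A1_neq0 B1_neq0.
by rewrite -beta_ratio_fsetprod beta_le_ratio ?fsetprod_neq0.
Qed.

Lemma beta_fsetprod_gmean_le_card (A B : {fset K1 * K2}) : 1 < p ->
  beta p V1 * beta p V2 * gmean (1 / p) #|` A|%:R #|` B|%:R
    <= #|` sumset (sumset A B) (fsetprod V1 V2)|%:R.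
Proof.
move=> p_gt1; set C := sumset (sumset A B) (fsetprod V1 V2).
have e_gt0 : 0 < 1 / p by rewrite divr_gt0 // (lt_trans ltr01).
have e_lt1 : 1 / p < 1 by rewrite ltr_pdivrMr ?mul1r // (lt_trans ltr01).
have [->|beta2_neq0] := eqVneq (beta p V2) 0; first by rewrite mulr0 mul0r.
have beta2_gt0 : 0 < beta p V2 by rewrite lt_def beta2_neq0 beta_ge0.
have fiber_gt0 (D : {fset K1 * K2}) x : x \in fst @` D -> 0 < #|` fiber D x|%:R :> R.
  by move=> /fiber_neq0; rewrite ltr0n cardfs_gt0.
have := discrete_prekopa_leindler e_gt0 e_lt1 (beta_gmean_le_card p V1)
  (f := fun x => #|` fiber A x|%:R) (g := fun y => #|` fiber B y|%:R)
  (h := fun z => #|` fiber C z|%:R / beta p V2) (fiber_gt0 A) (fiber_gt0 B).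
rewrite -!natr_sum -mulr_suml -natr_sum !sum_card_fiber //.
- rewrite ler_pdivlMr // mulrAC; apply.
  move=> x y v xA yB vV1; rewrite ler_pdivlMr // mulrC.
  apply: le_trans (beta_gmean_le_card _ _ (fiber_neq0 xA) (fiber_neq0 yB)) _.
  rewrite ler_nat fsubset_leq_card // -(fiber_fsetprod V2 vV1).
  exact: fsubset_trans (sumsetS (fiber_sumset _ _ _ _) (fsubset_refl _)) (fiber_sumset _ _ _ _).
move=> x; rewrite !fst_sumset => /sumsetP[x' x'AB [_ /imfsetP[v vV ->] ->]].
by rewrite mem_sumset //; move: vV; rewrite mem_fsetprod => /andP[].
Qed.

End BetaProduct.

Theorem mainTheorem7 (R : realType) (K1 K2 : zmodType)
  (V1 : {fset K1}) (V2 : {fset K2}) (p : R) :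
  1 < p ->
  beta p (fsetprod V1 V2) = beta p V1 * beta p V2.
Proof.
move=> p_gt1; apply/le_anti; rewrite beta_fsetprod_le /=.
rewrite -[leRHS]mul1r; apply: le_mul_beta => // A B A_neq0 B_neq0.
rewrite mul1r ler_pdivlMr ?gmean_gt0 ?ltr0n ?cardfs_gt0 //.
exact: beta_fsetprod_gmean_le_card.
Qed.
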